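(* Let $\{\tau_n\}_{n=1}^\infty$ be a sequence of nonnegative real numbers. Suppose that either $\liminf_{n\to\infty}\tau_n>0$, or that both of the following hold: (a) $\liminf_{n\to\infty} n\tau_n>0$, and (b) there is a constant $C\in(0,\infty)$ such that for each integer $n\ge 0$, if $2^{n-1}\le k<2^n$ then $C\tau_{2^{n-1}}\ge \tau_k\ge C^{-1}\tau_{2^n}$. Then $\{\tau_n\}$ satisfies Condition A.
   Context: ''Positive'' means nonnegative and ''increasing''/''decreasing'' mean non-decreasing/non-increasing. A nonnegative sequence $\{\tau_n\}_{n\ge1}$ satisfies Condition A if for every nonnegative non-increasing sequence $\{c_n\}_{n\ge1}$ such that $\sum_{n=1}^\infty \tau_n\min(nc_n,1)<\infty$, we also have $\sum_{n=1}^\infty \tau_n n c_n<\infty$. *)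

From Stdlib Require Import Reals.
From Coquelicot Require Import Coquelicot.
Open Scope R_scope.

(* Sequences indexed by n >= 1 are represented as functions nat -> R whose
   value at 0 is irrelevant. *)

Definition ConditionA (tau : nat -> R) : Prop :=
  forall c : nat -> R,
    (forall n, (1 <= n)%nat -> 0 <= c n) ->
    (forall n, (1 <= n)%nat -> c (S n) <= c n) ->
    ex_series (fun n => tau (S n) * Rmin (INR (S n) * c (S n)) 1) ->
    ex_series (fun n => tau (S n) * INR (S n) * c (S n)).

(** Only hypothesis (a) matters, and the first alternative implies it.  If
    [tau n >= d / n] for large [n] and [n c n > 1] for some large [n], then
    for [n/2 <= j <= n] monotonicity gives [j c j >= j c n > j / n], so each
    term [tau j * min (j c j) 1] is at least [d / n]; these [n/2] terms sum to
    at least [d / 2], which the Cauchy criterion forbids far out.  Hence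
    [n c n <= 1] eventually, and then the two series of Condition A have the
    same tail. *)

From Stdlib Require Import Reals Lra Lia.
From Coquelicot Require Import Coquelicot.
Open Scope R_scope.

Lemma LimInf_seq_pos_eventually_ge (u : nat -> R) :
  Rbar_lt 0 (LimInf_seq u) -> exists d, 0 < d /\ eventually (fun n => d <= u n).
Proof.
  intros Hpos; destruct (ex_LimInf_seq u) as [l Hl].
  rewrite (is_LimInf_seq_unique _ _ Hl) in Hpos.
  destruct l as [r | |]; simpl in *; try contradiction.
  - assert (Hr2 : 0 < r / 2) by lra.
    destruct (Hl (mkposreal _ Hr2)) as [_ [N HN]].
    exists (r / 2); split; [lra |].
    exists N; intros n Hn; specialize (HN n Hn); simpl in HN; lra.
  - destruct (Hl 1) as [N HN].
    exists 1; split; [lra |].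
    exists N; intros n Hn; specialize (HN n Hn); lra.
Qed.

Lemma sum_n_m_ge_const (a : nat -> R) (lb : R) (n m : nat) :
  (n <= m)%nat -> (forall k, (n <= k <= m)%nat -> lb <= a k) ->
  INR (S m - n) * lb <= sum_n_m a n m.
Proof.
  induction m as [| m IH]; intros Hnm Hlb.
  - replace n with 0%nat by lia.
    rewrite sum_n_n; simpl; specialize (Hlb 0%nat ltac:(lia)); lra.
  - destruct (Nat.eq_dec n (S m)) as [-> | Hne].
    + rewrite sum_n_n, Nat.sub_succ_l, Nat.sub_diag by lia; simpl.
      specialize (Hlb (S m) ltac:(lia)); lra.
    + rewrite sum_n_Sm, Nat.sub_succ_l, S_INR by lia.
      assert (Hm : lb <= a (S m)) by (apply Hlb; lia).
      assert (IHm : INR (S m - n) * lb <= sum_n_m a n m)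
        by (apply IH; [lia | intros k Hk; apply Hlb; lia]).
      change plus with Rplus; lra.
Qed.

Section BlockLowerBound.

Variables (tau c : nat -> R) (d : R).
Hypothesis c_nonincreasing : forall n, (1 <= n)%nat -> c (S n) <= c n.

Lemma c_le (i j : nat) : (1 <= i <= j)%nat -> c j <= c i.
Proof.
  intros [Hi Hij]; induction Hij as [| j Hij IH]; [lra |].
  specialize (c_nonincreasing j ltac:(lia)); lra.
Qed.

Lemma Rmin_scaled_ge (j n : nat) : (1 <= j <= n)%nat -> 1 < INR n * c n ->
  INR j / INR n <= Rmin (INR j * c j) 1.
Proof.
  intros Hjn Hbig.
  assert (Hj : 0 < INR j) by (apply lt_0_INR; lia).
  assert (Hjn' : INR j <= INR n) by (apply le_INR; lia).
  assert (Hcj : 1 < INR n * c j).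
  { assert (c n <= c j) by (apply c_le; lia).
    assert (INR n * c n <= INR n * c j) by (apply Rmult_le_compat_l; lra).
    lra. }
  apply Rmin_glb; apply Rmult_le_reg_r with (INR n); try lra;
    unfold Rdiv; rewrite Rmult_assoc, Rinv_l by lra; nra.
Qed.

Lemma scaled_term_ge (j n : nat) : (1 <= j <= n)%nat -> 1 < INR n * c n ->
  d <= INR j * tau j -> 0 < d -> d / INR n <= tau j * Rmin (INR j * c j) 1.
Proof.
  intros Hjn Hbig Hd Hd0.
  assert (Hj : 0 < INR j) by (apply lt_0_INR; lia).
  assert (Hn : 0 < INR n) by (apply lt_0_INR; lia).
  assert (Htau : 0 <= tau j) by nra.
  apply Rle_trans with (tau j * (INR j / INR n));
    [| apply Rmult_le_compat_l, Rmin_scaled_ge; auto].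
  unfold Rdiv; rewrite <- Rmult_assoc.
  apply Rmult_le_compat_r; [apply Rlt_le, Rinv_0_lt_compat |]; lra.
Qed.

Lemma eventually_scaled_le_1 : 0 < d ->
  eventually (fun n => d <= INR n * tau n) ->
  ex_series (fun n => tau (S n) * Rmin (INR (S n) * c (S n)) 1) ->
  eventually (fun n => INR (S n) * c (S n) <= 1).
Proof.
  intros Hd [N HN] Hs.
  assert (Hd2 : 0 < d / 2) by lra.
  destruct (Cauchy_ex_series _ Hs (mkposreal _ Hd2)) as [K HK].
  exists (2 * (K + N))%nat; intros n Hn.
  apply Rnot_lt_le; intros Hbig.
  assert (Hhalf : exists m, (2 * m <= n <= 2 * m + 1)%nat)
    by (destruct (Nat.Even_or_Odd n) as [[m ?] | [m ?]]; exists m; lia).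
  destruct Hhalf as [m Hm].
  assert (Hn0 : 0 < INR (S n)) by (apply lt_0_INR; lia).
  assert (Hblock : INR (S n - m) * (d / INR (S n))
                   <= sum_n_m (fun k => tau (S k) * Rmin (INR (S k) * c (S k)) 1) m n).
  { apply sum_n_m_ge_const; [lia |].
    intros k Hk; apply scaled_term_ge; auto; [lia | apply HN; lia]. }
  assert (Hcount : INR (S n) <= 2 * INR (S n - m)).
  { replace 2 with (INR 2) by reflexivity.
    rewrite <- mult_INR; apply le_INR; lia. }
  assert (Hblock_ge : d / 2 <= INR (S n - m) * (d / INR (S n))).
  { apply Rmult_le_reg_r with (2 * INR (S n)); [lra |].
    replace (INR (S n - m) * (d / INR (S n)) * (2 * INR (S n)))
      with (2 * INR (S n - m) * d) by (field; lra).
    nra. }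
  specialize (HK m n ltac:(lia) ltac:(lia)).
  apply (Rlt_irrefl (d / 2)); eapply Rle_lt_trans; [| exact HK].
  eapply Rle_trans; [exact Hblock_ge |].
  eapply Rle_trans; [exact Hblock | apply Rle_abs].
Qed.

End BlockLowerBound.

Lemma ConditionA_of_eventually_scaled_ge (tau : nat -> R) (d : R) : 0 < d ->
  eventually (fun n => d <= INR n * tau n) -> ConditionA tau.
Proof.
  intros Hd Htau c _ Hcdec Hs.
  destruct (eventually_scaled_le_1 tau c d Hcdec Hd Htau Hs) as [M HM].
  apply (ex_series_incr_n _ M); apply (ex_series_incr_n _ M) in Hs.
  apply ex_series_ext with (2 := Hs); intros k.
  rewrite Rmin_left, Rmult_assoc by (apply HM; lia); reflexivity.
Qed.

Theorem proposition1 (tau : nat -> R)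
  (Htau : forall n, (1 <= n)%nat -> 0 <= tau n) :
  (Rbar_lt 0 (LimInf_seq tau) \/
   (Rbar_lt 0 (LimInf_seq (fun n => INR n * tau n)) /\
    exists C : R, 0 < C /\
      forall n k : nat, (1 <= n)%nat ->
        (2 ^ (n - 1) <= k < 2 ^ n)%nat ->
        C * tau (2 ^ (n - 1))%nat >= tau k /\ tau k >= / C * tau (2 ^ n)%nat)) ->
  ConditionA tau.
Proof.
  intros [Hinf | [Hinf _]];
    destruct (LimInf_seq_pos_eventually_ge _ Hinf) as [d [Hd [N HN]]];
    apply (ConditionA_of_eventually_scaled_ge tau d Hd).
  - exists (S N); intros n Hn.
    assert (Hn1 : 1 <= INR n) by (apply (le_INR 1); lia).
    specialize (HN n ltac:(lia)); nra.
  - exists N; exact HN.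
Qed.
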